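(* Let $D$ be a finite digraph and let $k$ be a positive integer. Then $\pi_k(D) \leq \alpha'_k(D)$ and $\chi'_k(D) \leq \lambda_k(D)$.
   Context: Paths are directed paths. A path partition of $D$ is a collection of vertex-disjoint paths of $D$ covering $V(D)$. The $k$-norm of a path partition $\mathcal{P}$ is $|\mathcal{P}|_k=\sum_{P\in\mathcal{P}}\min\{|V(P)|,k\}$, and $\pi_k(D)$ is the minimum $k$-norm over all path partitions of $D$. A partial $k$-dicoloring of $D$ is a collection $\{S_1,\dots,S_k\}$ of $k$ pairwise disjoint vertex sets of $D$ each of which induces an acyclic subdigraph; $\alpha'_k(D)$ is the maximum number of vertices covered by a partial $k$-dicoloring of $D$. A dicoloring of $D$ is a partition of $V(D)$ into sets each inducing an acyclic subdigraph; the $k$-norm of a dicoloring $\mathcal{S}$ is $|\mathcal{S}|_k=\sum_{S\in\mathcal{S}}\min\{|S|,k\}$, and $\chi'_k(D)$ is the minimum $k$-norm over all dicolorings of $D$. A $k$-pack is a collection of $k$ vertex-disjoint paths of $D$; $\lambda_k(D)$ is the maximum number of vertices covered by a $k$-pack of $D$. *)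

From mathcomp Require Import all_boot.
From mathcomp Require Import boolp.
Set Implicit Arguments. Unset Strict Implicit. Unset Printing Implicit Defensive.

Record digraph : Type := Digraph {
  dvert : finType;
  darc : rel dvert;
  darc_irr : irreflexive darc }.

Section Digraph.
Variable D : digraph.
Local Notation V := (dvert D).
Local Notation E := (@darc D).

Definition is_dipath (p : seq V) : bool :=
  if p is x :: q then uniq p && path E x q else false.

Definition path_partition (P : seq (seq V)) : bool :=
  all is_dipath P && perm_eq (flatten P) (enum V).

Definition path_knorm (k : nat) (P : seq (seq V)) : nat :=
  \sum_(p <- P) minn (size p) k.

Definition acyclic_set (S : {set V}) : Prop :=
  forall c : seq V, c != [::] -> {subset c <= S} -> uniq c -> ~~ cycle E c.

Definition pi_pred (k : nat) : pred nat := fun n =>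
  `[< exists P, path_partition P /\ path_knorm k P = n >].

Lemma pi_ex k : exists n, pi_pred k n.
Proof.
exists (path_knorm k [seq [:: v] | v <- enum V]); apply/asboolP.
eexists; split; last reflexivity.
apply/andP; split; first by apply/allP => p /mapP [v _ ->] /=.
suff -> : flatten [seq [:: v] | v <- enum V] = enum V by [].
by elim: (enum V) => //= x s ->.
Qed.

Definition pi_k (k : nat) : nat := ex_minn (pi_ex k).

Definition alpha_pred (k : nat) : pred nat := fun n =>
  `[< exists C : 'I_k -> {set V},
        (forall i, acyclic_set (C i)) /\
        (forall i j, i != j -> [disjoint C i & C j]) /\
        #|\bigcup_(i < k) C i| = n >].

Lemma alpha_ex k : exists n, alpha_pred k n.
Proof.
exists 0; apply/asboolP; exists (fun _ => set0); split; last split.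
- by move=> _ c /eqP; case: c => // x c _ /(_ x); rewrite inE eqxx in_set0 => /(_ isT).
- by move=> i j _; rewrite -setI_eq0 set0I.
- by rewrite big1 ?cards0.
Qed.

Lemma alpha_ub k n : alpha_pred k n -> n <= #|V|.
Proof. by move=> /asboolP [C [_ [_ <-]]]; apply: max_card. Qed.

Definition alpha'_k (k : nat) : nat := ex_maxn (alpha_ex k) (@alpha_ub k).

Definition chi_pred (k : nat) : pred nat := fun n =>
  `[< exists S : {set {set V}},
        partition S [set: V] /\ (forall A, A \in S -> acyclic_set A) /\
        \sum_(A in S) minn #|A| k = n >].

Lemma chi_ex k : exists n, chi_pred k n.
Proof.
pose S := [set [set v] | v : V].
exists (\sum_(A in S) minn #|A| k); apply/asboolP; exists S; split; last split=> //.
- apply/and3P; split.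
  + apply/eqP/setP => x; rewrite in_setT; apply/bigcupP.
    by exists [set x]; [apply/imsetP; exists x | rewrite in_set1].
  + apply/trivIsetP => A B /imsetP [a _ ->] /imsetP [b _ ->] ab.
    rewrite disjoints1 in_set1; apply: contra ab => /eqP ->; by [].
  + by apply/imsetP => -[x _] /setP /(_ x); rewrite in_set0 in_set1 eqxx.
- move=> A /imsetP [a _ ->] c c0 sub _.
  case: c c0 sub => // x [|y c] _ sub /=.
  + by rewrite andbT darc_irr.
  + have /set1P -> := sub x (mem_head _ _).
    have /set1P -> : y \in [set a] by apply: sub; rewrite !inE eqxx orbT.
    by rewrite darc_irr.
Qed.

Definition chi'_k (k : nat) : nat := ex_minn (chi_ex k).

(* k-packs: k vertex-disjoint paths (READING: at most k nonempty paths,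
   equivalently k paths where empty paths are allowed) *)
Definition lambda_pred (k : nat) : pred nat := fun n =>
  `[< exists Q : seq (seq V),
        size Q <= k /\ all is_dipath Q /\ uniq (flatten Q) /\ size (flatten Q) = n >].

Lemma lambda_ex k : exists n, lambda_pred k n.
Proof. by exists 0; apply/asboolP; exists [::]. Qed.

Lemma lambda_ub k n : lambda_pred k n -> n <= #|V|.
Proof.
move=> /asboolP [Q [_ [_ [u <-]]]].
by rewrite -(card_uniqP u); apply: max_card.
Qed.

Definition lambda_k (k : nat) : nat := ex_maxn (lambda_ex k) (@lambda_ub k).

End Digraph.

From mathcomp Require Import all_boot zify boolp.
Set Implicit Arguments. Unset Strict Implicit. Unset Printing Implicit Defensive.

(* Everything rests on a graded path partition: a path partition P with a rank
   function h such that the ranks along each path of P are size - 1, ..., 1, 0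
   and every level set {h = j} is acyclic.  It is built by depth-first search:
   from a root s, recursively partition the vertices reachable from s (without
   s) from the out-neighbours of s and prepend s to a path of maximal rank;
   then recurse on the vertices not reachable from s.  No arc enters them from
   the reachable part, so the union of two acyclic levels stays acyclic.
   The levels of rank < k form a partial k-dicolouring covering exactly
   |P|_k vertices.  The levels form a dicolouring in which level j has one
   vertex per path longer than j, so its k-norm counts, level by level, at
   most the vertices of the k longest paths of P. *)

Lemma count_iota_ltn k n : count (fun i => i < k) (iota 0 n) = minn n k.
Proof. by elim: n => [|n IHn]; rewrite ?min0n // -addn1 iotaD count_cat IHn /=; lia. Qed.

Lemma sum_nat_of_bool (T : Type) (a : pred T) (s : seq T) :
  \sum_(x <- s) (a x : nat) = count a s.
Proof. by rewrite -sumn_count sumnE big_map. Qed.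

Lemma count_take_sorted (T : Type) (r : rel T) (a : pred T) k s :
  transitive r -> (forall x y, r x y -> a y -> a x) -> sorted r s ->
  count a (take k s) = minn (count a s) k.
Proof.
move=> r_tr a_mono; elim: s k => [|x s IHs] [|k] //= xs; rewrite ?minn0 //.
have ss := path_sorted xs; case ax: (a x); first by rewrite /= IHs //; lia.
have c0 : count a s = 0.
  apply/eqP; rewrite -leqn0 leqNgt -has_count -all_predC.
  by apply: sub_all (order_path_min r_tr xs) => y rxy /=; apply: contraFN ax; apply: a_mono.
by rewrite IHs // c0 add0n !min0n.
Qed.

Definition longest (T : eqType) k (s : seq (seq T)) :=
  take k (sort (fun p q => size q <= size p) s).

Lemma sum_min_count_le_longest (T : eqType) k L (s : seq (seq T)) :
  \sum_(j < L) minn (count (fun p => j < size p) s) k <= size (flatten (longest k s)).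
Proof.
set r := fun p q : seq T => size q <= size p.
have r_tr : transitive r by move=> p q u; rewrite /r => ? ?; lia.
have r_sorted : sorted r (sort r s) by apply: sort_sorted => p q; apply: leq_total.
have sort_perm : perm_eq (sort r s) s by rewrite perm_sort.
rewrite size_flatten sumnE big_map.
apply: (@leq_trans (\sum_(q <- longest k s) \sum_(j < L) (j < size q))).
  rewrite exchange_big /=; apply: leq_sum => j _.
  rewrite sum_nat_of_bool (count_take_sorted k r_tr) // ?(permP sort_perm) //.
  by move=> p q; rewrite /r => ? ?; lia.
apply: leq_sum => q _.
by rewrite -(big_mkord xpredT (fun j => j < size q : nat)) sum_nat_of_bool count_iota_ltn geq_minr.
Qed.

Section Digraph.
Variable D : digraph.
Local Notation V := (dvert D).
Local Notation E := (@darc D).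
Implicit Types (A B R X S : {set V}) (P : seq (seq V)) (h : V -> nat).

Lemma acyclic_subset A B : acyclic_set B -> A \subset B -> acyclic_set A.
Proof. by move=> acB /subsetP AB c c0 cA; apply: acB => // x /cA /AB. Qed.

Lemma acyclic_set0 : acyclic_set (set0 : {set V}).
Proof. by move=> [|x c] // _ /(_ x (mem_head _ _)); rewrite inE. Qed.

Lemma acyclic_set1 (s : V) : acyclic_set [set s].
Proof.
move=> [|x [|y c]] // _ cs _ /=; first by rewrite andbT darc_irr.
have /set1P -> := cs x (mem_head _ _).
have /set1P -> : y \in [set s] by apply: cs; rewrite !inE eqxx orbT.
by rewrite darc_irr.
Qed.

Lemma path_subset_closed A B x r :
  (forall a b, a \in A -> b \in B -> ~~ E a b) ->
  x \in A -> {subset r <= A :|: B} -> path E x r -> {subset r <= A}.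
Proof.
move=> nAB; elim: r x => [|y r IHr] x // xA rAB /= /andP [xy yr].
have yA : y \in A.
  by case/setUP: (rAB y (mem_head _ _)) => // yB; move: (nAB _ _ xA yB); rewrite xy.
move=> z /predU1P [-> //|zr]; apply: IHr yA _ yr _ zr => w wr.
by apply: rAB; rewrite inE wr orbT.
Qed.

Lemma acyclic_setU A B : acyclic_set A -> acyclic_set B ->
  (forall a b, a \in A -> b \in B -> ~~ E a b) -> acyclic_set (A :|: B).
Proof.
move=> acA acB nAB c c0 cAB uc.
have [/hasP [a ac aA] | /hasPn cNA] := boolP (has (mem A) c); last first.
  apply: acB => // x xc; case/setUP: (cAB x xc) => // xA.
  by move: (cNA x xc); rewrite /= xA.
have [i c' c'E] := rot_to ac.
apply/negP => cyc.
have pc : path E a (rcons c' a) by move: cyc; rewrite -(rot_cycle i) c'E.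
have cA : {subset a :: c' <= A}.
  move=> x /predU1P [-> // | xc']; apply: (path_subset_closed nAB aA _ pc).
    by move=> y; rewrite mem_rcons -c'E mem_rot => /cAB.
  by rewrite mem_rcons; apply: mem_behead.
by have := acA (a :: c') isT cA; rewrite -c'E rot_uniq rot_cycle cyc => /(_ uc).
Qed.

Definition darc_in X : rel V := fun x y => [&& x \in X, y \in X & E x y].

Definition reach X (s : V) : {set V} := [set y | connect (darc_in X) s y].

Lemma reach_subset X s : s \in X -> reach X s \subset X.
Proof.
move=> sX; apply/subsetP => _ /[!inE] /connectP [p + ->].
by elim: p s sX => [|y p IHp] x //= xX /andP [/and3P [_ yX _]]; apply: IHp.
Qed.

Lemma reach_closed X s a b : a \in reach X s -> darc_in X a b -> b \in reach X s.
Proof. by rewrite !inE => sa ab; apply: connect_trans sa (connect1 ab). Qed.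

Lemma connect_notin_closed X R a p :
  (forall a b, a \in R -> darc_in X a b -> b \in R) ->
  path (darc_in X) a p -> last a p \notin R ->
  a \notin R /\ connect (darc_in (X :\: R)) a (last a p).
Proof.
move=> clR; elim: p a => [|b p IHp] a /=; first by move=> _ aR.
move=> /andP [ab pb] lR; have [bR cb] := IHp b pb lR.
have aR : a \notin R by apply: contra bR => aR; apply: clR ab.
split=> //; apply: connect_trans cb; apply: connect1.
by move: ab => /and3P [aX bX ab]; rewrite /darc_in !inE aR aX bR bX ab.
Qed.

Lemma reach_out_arc X s x : x \in reach X s -> x != s ->
  exists2 w, w \in [set w in reach X s :\ s | E s w] &
    connect (darc_in (reach X s :\ s)) w x.
Proof.
rewrite inE => /connectP [p sp ->] {x}.
case: (shortenP sp) => p' sp' usp' _ {p sp}.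
case: p' sp' usp' => [|w q]; first by rewrite eqxx.
move=> sp' /andP [swq uq] _.
have wqR : {subset w :: q <= reach X s :\ s}.
  move=> z zq; rewrite !inE (path_connect sp') ?andbT; last by rewrite inE zq orbT.
  by apply: contraNneq swq => <-.
move: sp' => /= /andP [/and3P [_ _ sw] wq].
exists w; first by rewrite inE wqR ?mem_head.
apply/connectP; exists q => //; apply: (sub_in_path (P := mem (reach X s :\ s))) wq.
  by move=> a b aR bR /and3P [_ _ ab]; rewrite /darc_in aR bR ab.
exact/allP.
Qed.

Definition graded_partition X P h :=
  [/\ all (@is_dipath D) P, uniq (flatten P), flatten P =i X,
      {in P, forall p, map h p = rev (iota 0 (size p))} &
      forall j, acyclic_set [set x in X | h x == j]].

Lemma graded_partition_set1 s : graded_partition [set s] [:: [:: s]] (fun _ => 0).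
Proof.
split=> // [x | p | j]; first by rewrite !inE.
  by rewrite inE => /eqP ->.
by apply: acyclic_subset (@acyclic_set1 s) _; apply/subsetP => x /[!inE] /andP [].
Qed.

Lemma graded_partition_cons X P h s y t :
  graded_partition X P h -> s \notin X -> y :: t \in P -> E s y ->
  {in X, forall x, h x <= size t} ->
  graded_partition (s |: X) ((s :: y :: t) :: rem (y :: t) P)
    (fun x => if x == s then (size t).+1 else h x).
Proof.
move=> [dP uP mP hP aP] sX ytP sy hX.
set h' := fun x => if x == s then _ else _.
have pf := perm_flatten (perm_to_rem ytP).
have flatE : flatten ((s :: y :: t) :: rem (y :: t) P) =
             s :: flatten ((y :: t) :: rem (y :: t) P) by [].
have sP q : q \in P -> s \notin q.
  by move=> qP; apply: contra sX => sq; rewrite -mP; apply/flattenP; exists q.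
have h'E q : q \in P -> map h' q = map h q.
  move=> qP; apply/eq_in_map => x xq; rewrite /h' ifN //.
  by apply: contraNneq (sP q qP) => <-.
split.
- have /= /andP [/andP [-> ->] ->] := allP dP _ ytP.
  rewrite sP //= sy; apply/allP => q /mem_rem; exact: (allP dP).
- by rewrite flatE cons_uniq -(perm_uniq pf) uP -(perm_mem pf) mP sX.
- by move=> x; rewrite flatE inE -(perm_mem pf) mP !inE.
- move=> q /predU1P [-> | /mem_rem qP]; last by rewrite h'E // hP.
  have -> : map h' (s :: y :: t) = (size t).+1 :: map h' (y :: t) by rewrite /= /h' eqxx.
  by rewrite h'E // hP // -[size (s :: _)]addn1 iotaD rev_cat.
- move=> j; have [-> | nj] := eqVneq j (size t).+1.
    apply: acyclic_subset (@acyclic_set1 s) _; apply/subsetP => x /[!inE] /andP [].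
    rewrite /h'; case: eqVneq => //= _ xX /eqP hx.
    by move: (hX x xX); rewrite hx ltnn.
  apply: acyclic_subset (aP j) _; apply/subsetP => x /[!inE] /andP [].
  by rewrite /h'; case: eqVneq => [-> _ /eqP sj | _ /= -> ->]; rewrite ?sj ?eqxx in nj.
Qed.

Lemma graded_partition_cat R X P1 h1 P2 h2 :
  graded_partition R P1 h1 -> graded_partition X P2 h2 -> [disjoint R & X] ->
  (forall a b, a \in R -> b \in X -> ~~ E a b) ->
  graded_partition (R :|: X) (P1 ++ P2) (fun x => if x \in R then h1 x else h2 x).
Proof.
move=> [dP1 uP1 mP1 hP1 aP1] [dP2 uP2 mP2 hP2 aP2] RX nRX.
split.
- by rewrite all_cat dP1 dP2.
- rewrite flatten_cat cat_uniq uP1 uP2 andbT; apply/hasPn => x.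
  by rewrite mP1 mP2 => /(disjointFl RX) ->.
- by move=> x; rewrite flatten_cat mem_cat mP1 mP2 inE.
- move=> q /[!mem_cat] /orP [qP | qP]; [rewrite -(hP1 _ qP) | rewrite -(hP2 _ qP)];
    apply/eq_in_map => x xq.
    by rewrite (_ : x \in R) // -mP1; apply/flattenP; exists q.
  by rewrite (disjointFl RX) // -mP2; apply/flattenP; exists q.
- move=> j; apply: acyclic_subset (acyclic_setU (aP1 j) (aP2 j) _) _.
    by move=> a b /[!inE] /andP [aR _] /andP [bX _]; apply: nRX.
  apply/subsetP => x /[!inE] /andP [].
  by case: (boolP (x \in R)) => [_ _ -> | _ /= -> ->]; rewrite ?orbT.
Qed.

Definition top_path X S P h (y : V) t :=
  [/\ y :: t \in P, y \in S & {in X, forall x, h x <= size t}].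

Definition graded_from X S := exists P h,
  graded_partition X P h /\ (X != set0 -> exists y t, top_path X S P h y t).

Lemma graded_from_set0 S : graded_from set0 S.
Proof.
exists [::], (fun _ => 0); split; last by rewrite eqxx.
split=> // [x | j]; first by rewrite inE.
by apply: acyclic_subset acyclic_set0 _; apply/subsetP => x /[!inE].
Qed.

Lemma graded_from_cons R s S1 : s \in R -> S1 \subset [set y | E s y] ->
  graded_from (R :\ s) S1 -> graded_from R [set s].
Proof.
move=> sR /subsetP S1s [P [h [grP top]]]; rewrite -(setD1K sR).
have sX : s \notin R :\ s by rewrite !inE eqxx.
have [-> | /top [y [t [ytP yS1 hX]]]] := eqVneq (R :\ s) set0.
  exists [:: [:: s]], (fun _ => 0); rewrite setU0; split; first exact: graded_partition_set1.
  by exists s, [::]; split; rewrite ?inE.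
exists ((s :: y :: t) :: rem (y :: t) P), (fun x => if x == s then (size t).+1 else h x).
split=> [|_]; first by apply: graded_partition_cons => //; have := S1s y yS1; rewrite inE.
exists s, (y :: t); split; rewrite ?mem_head ?inE //.
by move=> x /setU1P [-> | xX]; rewrite ?eqxx //; case: eqP => // _; apply: leqW (hX x xX).
Qed.

Lemma graded_from_union R X SR SX S : R != set0 ->
  graded_from R SR -> graded_from X SX -> [disjoint R & X] ->
  (forall a b, a \in R -> b \in X -> ~~ E a b) -> SR \subset S -> SX \subset S ->
  graded_from (R :|: X) S.
Proof.
move=> R0 [P1 [h1 [gr1 top1]]] [P2 [h2 [gr2 top2]]] RX nRX /subsetP SRS /subsetP SXS.
exists (P1 ++ P2), (fun x => if x \in R then h1 x else h2 x).
split=> [|_]; first exact: graded_partition_cat.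
have [y1 [t1 [yP1 yS1 hR]]] := top1 R0.
have [X0 | /top2 [y2 [t2 [yP2 yS2 hX]]]] := eqVneq X set0.
  exists y1, t1; split; [by rewrite mem_cat yP1 | exact: SRS |].
  by move=> x; rewrite X0 setU0 => xR; rewrite xR; apply: hR.
have [le21 | lt12] := leqP (size t2) (size t1).
  exists y1, t1; split; [by rewrite mem_cat yP1 | exact: SRS |].
  move=> x /setUP [xR | xX]; first by rewrite xR; apply: hR.
  by rewrite (disjointFl RX xX); apply: leq_trans (hX x xX) le21.
exists y2, t2; split; [by rewrite mem_cat yP2 orbT | exact: SXS |].
move=> x /setUP [xR | xX]; last by rewrite (disjointFl RX xX); apply: hX.
by rewrite xR; apply: leq_trans (hR x xR) (ltnW lt12).
Qed.

Lemma graded_from_reach X S : S \subset X ->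
  (forall x, x \in X -> exists2 s, s \in S & x \in reach X s) -> graded_from X S.
Proof.
have [n] := ubnP #|X|; elim: n => // n IHn in X S *; rewrite ltnS => leXn SX XS.
have [-> | /set0Pn [x0 /XS [s sS _]]] := eqVneq X set0; first exact: graded_from_set0.
have sX := subsetP SX s sS.
set R := reach X s; have sR : s \in R by rewrite inE connect0.
have RX : R \subset X by apply: reach_subset.
have lt_n A : A \subset X -> s \notin A -> #|A| < n.
  move=> AX sA; apply: leq_trans leXn; apply: proper_card.
  by apply/properP; split=> //; exists s.
have gR : graded_from R [set s].
  apply: (@graded_from_cons _ _ [set w in R :\ s | E s w]) => //.
    by apply/subsetP => w /[!inE] /andP [].
  apply: IHn.
  - by apply: lt_n; [apply: subset_trans (subsetDl _ _) RX | rewrite !inE eqxx].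
  - by apply/subsetP => w /[!inE] /andP [].
  - move=> x; rewrite in_setD1 => /andP [xs xR].
    by have [w wS1 wx] := reach_out_arc xR xs; exists w; rewrite // inE.
have gX : graded_from (X :\: R) (S :\: R).
  apply: IHn; [by apply: lt_n; [apply: subsetDl | rewrite in_setD sR] | exact: setSD |].
  move=> x; rewrite in_setD => /andP [xR xX]; have [s' s'S] := XS x xX.
  rewrite inE => /connectP [p pp xE]; rewrite xE in xR *.
  have [s'R s'x] := connect_notin_closed (@reach_closed X s) pp xR.
  by exists s'; rewrite ?in_setD ?s'R // inE.
suff: graded_from (R :|: X :\: R) S by rewrite setDE setUIr setUCr setIT (setUidPr RX).
apply: graded_from_union _ gR gX _ _ _ _.
- by apply/set0Pn; exists s.
- by rewrite disjoint_sym disjoints_subset setDE subsetIr.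
- move=> a b aR; rewrite in_setD => /andP [bR bX]; apply: contraNN bR => ab.
  by apply: (reach_closed aR); rewrite /darc_in (subsetP RX a aR) bX ab.
- by rewrite sub1set.
- exact: subsetDl.
Qed.

Lemma pi_k_le k n : pi_pred D k n -> pi_k D k <= n.
Proof. by rewrite /pi_k; case: ex_minnP => m _; apply. Qed.

Lemma alpha'_k_ge k n : alpha_pred D k n -> n <= alpha'_k D k.
Proof. by rewrite /alpha'_k; case: ex_maxnP => m _; apply. Qed.

Lemma chi'_k_le k n : chi_pred D k n -> chi'_k D k <= n.
Proof. by rewrite /chi'_k; case: ex_minnP => m _; apply. Qed.

Lemma lambda_k_ge k n : lambda_pred D k n -> n <= lambda_k D k.
Proof. by rewrite /lambda_k; case: ex_maxnP => m _; apply. Qed.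

Lemma lambda_pred_longest k P :
  path_partition P -> lambda_pred D k (size (flatten (longest k P))).
Proof.
move=> /andP [dP /perm_uniq uP]; rewrite /longest; set Q := sort _ P.
have QP : perm_eq Q P by rewrite perm_sort.
apply/asboolP; exists (take k Q); split; [|split; [|split]] => //.
- by rewrite size_take; case: ltnP.
- by apply/allP => q /mem_take; rewrite (perm_mem QP) => /(allP dP).
- have : uniq (flatten Q) by rewrite (perm_uniq (perm_flatten QP)) uP enum_uniq.
  by rewrite -{1}(cat_take_drop k Q) flatten_cat cat_uniq => /andP [].
Qed.

Lemma graded_partition_exists : exists P h, graded_partition [set: V] P h.
Proof.
have reachT x : x \in [set: V] -> exists2 s, s \in [set: V] & x \in reach [set: V] s.
  by exists x; rewrite !inE ?connect0.
by have [P [h [grP _]]] := graded_from_reach (subxx _) reachT; exists P, h.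
Qed.

Section GradedPartition.
Variables (P : seq (seq V)) (h : V -> nat).
Hypothesis grP : graded_partition [set: V] P h.

Lemma graded_path_partition : path_partition P.
Proof.
have [dP uP mP _ _] := grP; rewrite /path_partition dP.
by apply: uniq_perm => // [|x]; rewrite ?enum_uniq // mem_enum mP inE.
Qed.

Lemma acyclic_graded_level j : acyclic_set [set x | h x == j].
Proof.
have [_ _ _ _ aP] := grP; apply: acyclic_subset (aP j) _.
by apply/subsetP => x; rewrite !inE.
Qed.

Lemma card_graded (a : pred nat) :
  #|[set x | a (h x)]| = sumn [seq count a (iota 0 (size p)) | p <- P].
Proof.
have [_ _ _ hP _] := grP; have /andP [_ flatP] := graded_path_partition.
rewrite cardsE cardE /enum_mem size_filter -enumT -(permP flatP) count_flatten.
by congr sumn; apply/eq_in_map => p pP; rewrite -(count_rev a) -(hP p pP) count_map.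
Qed.

Lemma path_knorm_graded k : path_knorm k P = #|[set x | h x < k]|.
Proof.
rewrite (card_graded (fun i => i < k)) /path_knorm sumnE big_map.
by apply: eq_bigr => p _; rewrite count_iota_ltn.
Qed.

Lemma card_graded_level j : #|[set x | h x == j]| = count (fun p => j < size p) P.
Proof.
rewrite (card_graded (pred1 j)) -sumn_count; congr sumn; apply/eq_map => p.
by rewrite count_uniq_mem ?iota_uniq // mem_iota.
Qed.

Lemma graded_pi_k_le_alpha'_k k : pi_k D k <= alpha'_k D k.
Proof.
apply: (@leq_trans (path_knorm k P)).
  by apply: pi_k_le; apply/asboolP; exists P; split=> //; apply: graded_path_partition.
rewrite path_knorm_graded; apply: alpha'_k_ge; apply/asboolP.
exists (fun i : 'I_k => [set x | h x == i]); split; [|split].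
- by move=> i; apply: acyclic_graded_level.
- move=> i j ij; rewrite -setI_eq0; apply/eqP/setP => x; rewrite !inE.
  apply/negbTE/andP => -[/eqP hi /eqP hj].
  by move/eqP: ij; apply; apply: val_inj; rewrite /= -hi -hj.
- apply: eq_card => x; rewrite [in RHS]inE; apply/bigcupP/idP => [[i _] | hk].
    by rewrite inE => /eqP ->.
  by exists (Ordinal hk); rewrite ?inE.
Qed.

Lemma graded_chi'_k_le_lambda_k k : chi'_k D k <= lambda_k D k.
Proof.
pose A j := [set x | h x == j].
pose L := \max_x (h x).+1.
have hL x : h x < L by exact: (@leq_bigmax _ (fun y => (h y).+1) x).
pose J := [set j : 'I_L | A j != set0].
have A_inj : {in J &, injective (fun j : 'I_L => A j)}.
  move=> i j /[!inE] /set0Pn [x xAi] _ Aij; apply: ord_inj.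
  have xAj : x \in A j by rewrite -Aij.
  by move: xAi xAj; rewrite !inE => /eqP <- /eqP.
have chiJ : chi_pred D k (\sum_(j in J) minn #|A j| k).
  apply/asboolP; exists [set A j | j : 'I_L in J]; split; [|split].
  - apply/and3P; split.
    + apply/eqP/setP => x; rewrite in_setT; apply/bigcupP.
      exists (A (h x)); last by rewrite inE.
      apply/imsetP; exists (Ordinal (hL x)) => //.
      by rewrite inE; apply/set0Pn; exists x; rewrite inE.
    + apply/trivIsetP => _ _ /imsetP [i _ ->] /imsetP [j _ ->] Aij.
      rewrite -setI_eq0; apply/eqP/setP => x; rewrite !inE.
      by apply/negbTE/andP => -[/eqP hi /eqP hj]; move: Aij; rewrite /A -hi -hj eqxx.
    + by apply/imsetP => -[j]; rewrite inE => /[swap] <-; rewrite eqxx.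
  - by move=> _ /imsetP [j _ ->]; apply: acyclic_graded_level.
  - by rewrite big_imset.
apply: leq_trans (chi'_k_le chiJ) _.
apply: leq_trans (lambda_k_ge (lambda_pred_longest k graded_path_partition)).
apply: leq_trans (sum_min_count_le_longest k L P).
by rewrite big_mkcond /=; apply: leq_sum => j _; rewrite card_graded_level; case: ifP.
Qed.

End GradedPartition.

End Digraph.

Unset Implicit Arguments.

(* [hk] is unused: both inequalities also hold for k = 0. *)
Theorem mainTheorem1 (D : digraph) (k : nat) (hk : 0 < k) :
  pi_k D k <= alpha'_k D k /\ chi'_k D k <= lambda_k D k.
Proof.
have [P [h grP]] := graded_partition_exists D.
by split; [exact: graded_pi_k_le_alpha'_k grP k | exact: graded_chi'_k_le_lambda_k grP k].
Qed.
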